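(* Let $L$ be an ordered two-component flat virtual link diagram with components $1$ and $2$, and let $1\cap 2$ denote the set of flat classical crossings at which a strand of component $1$ crosses a strand of component $2$. Then the integer $$i(L)=\sum_{x\in 1\cap 2}\operatorname{sgn}(x)$$ is invariant under flat virtual equivalence, i.e. it is unchanged by all flat classical Reidemeister moves and all flat virtual Reidemeister moves applied to the link diagram.
   Context: A flat virtual link diagram is a finite collection of oriented closed curves immersed in the plane whose only singularities are finitely many transverse double points, each of which is either a flat classical crossing (a crossing with no over/under information) or a virtual crossing (drawn encircled). Flat virtual equivalence is the equivalence relation generated by planar isotopy, the flat classical Reidemeister moves (the shadows of Reidemeister moves 1, 2, 3, with no over/under data) and the flat virtual Reidemeister moves (the virtual moves V1, V2, V3 involving only virtual crossings, and the mixed move in which a strand containing only virtual crossings is passed across a flat classical crossing). Flat moves may be applied between different components. For $x\in 1\cap 2$, $\operatorname{sgn}(x)=+1$ if the pair (tangent vector of component $1$ at $x$, tangent vector of component $2$ at $x$) is a positively oriented basis of the plane, and $\operatorname{sgn}(x)=-1$ otherwise. Virtual crossings do not contribute. *)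

(* Flat virtual 2-component link diagrams are modelled by
   their (ordered, two-component) flat Gauss diagrams. *)
From mathcomp Require Import all_boot all_algebra.
From Stdlib Require Import Relations.
Set Implicit Arguments. Unset Strict Implicit. Unset Printing Implicit Defensive.
Import GRing.Theory.

(* A passage of a component through a flat classical crossing: (label, mark).
   mark = true  iff the tangent vector of this strand is the FIRST vector of
   the positively oriented basis (tangent of this strand, tangent of the other
   strand) at that crossing.  Virtual crossings are not recorded. *)
Definition passage := (nat * bool)%type.
(* a component: the cyclic sequence of its passages through classical crossings *)
Definition word := seq passage.
Definition gauss2 := (word * word)%type.

Definition labels (w : word) : seq nat := map fst w.

Definition wf_gauss2 (L : gauss2) : Prop :=
  forall n, n \in labels (L.1 ++ L.2) ->
    count_mem (n, true) (L.1 ++ L.2) = 1%N /\ count_mem (n, false) (L.1 ++ L.2) = 1%N.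

(* ---- templates: a diagram with holes where a local move takes place ---- *)
Inductive item := Pass of nat & bool | Hole of nat.
Definition template := (seq item * seq item)%type.

Definition fill_word (f : nat -> word) (w : seq item) : word :=
  flatten (map (fun it => match it with Pass n b => [:: (n, b)] | Hole j => f j end) w).
Definition fillT (f : nat -> word) (T : template) : gauss2 :=
  (fill_word f T.1, fill_word f T.2).

Definition isHole (j : nat) (it : item) : bool :=
  if it is Hole j' then j' == j else false.
Definition template_ok (k : nat) (T : template) : bool :=
  all (fun it => if it is Hole j then (j < k)%N else true) (T.1 ++ T.2) &&
  all (fun j => count (isHole j) (T.1 ++ T.2) == 1%N) (iota 0 k).
Definition tlabels (T : template) : seq nat :=
  pmap (fun it => if it is Pass n _ then Some n else None) (T.1 ++ T.2).

Definition relabel (f : nat -> nat) (L : gauss2) : gauss2 :=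
  ([seq (f p.1, p.2) | p <- L.1], [seq (f p.1, p.2) | p <- L.2]).

(* flat R1: a kink on one strand *)
Definition R1fill (n : nat) (b : bool) (j : nat) : word := [:: (n, b); (n, ~~ b)].
(* flat R2: two strands (holes 0 and 1) crossing twice at n, m, with opposite
   signs; par = the second strand runs parallel (else antiparallel) *)
Definition R2fill (n m : nat) (b par : bool) (j : nat) : word :=
  match j with
  | 0 => [:: (n, b); (m, ~~ b)]
  | _ => if par then [:: (n, ~~ b); (m, b)] else [:: (m, b); (n, ~~ b)]
  end.
(* flat R3: strands a, b, c (holes 0, 1, 2), crossings x = a∩b, y = a∩c,
   z = b∩c.  fa = along a, x comes before y; fb = along b, x before z;
   fc = along c, y before z.  e = orientation class of the triangle.
   The admissible sign patterns (those realised by three oriented lines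
   bounding a triangle) are: sign(t_a,t_b) = e * f_a * f_b etc. *)
Definition R3fill (x y z : nat) (e fa fb fc : bool) (j : nat) : word :=
  let pab := (e == (fa == fb)) in
  let pac := (e == (fa == fc)) in
  let pbc := (e == (fb == fc)) in
  match j with
  | 0 => if fa then [:: (x, pab); (y, pac)] else [:: (y, pac); (x, pab)]
  | 1 => if fb then [:: (x, ~~ pab); (z, pbc)] else [:: (z, pbc); (x, ~~ pab)]
  | _ => if fc then [:: (y, ~~ pac); (z, ~~ pbc)] else [:: (z, ~~ pbc); (y, ~~ pac)]
  end.

Inductive flat_step : gauss2 -> gauss2 -> Prop :=
| step_rot1 (k : nat) (L : gauss2) : flat_step L (rot k L.1, L.2)
| step_rot2 (k : nat) (L : gauss2) : flat_step L (L.1, rot k L.2)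
| step_relabel (f : nat -> nat) (L : gauss2) : injective f -> flat_step L (relabel f L)
| step_R1 (T : template) (n : nat) (b : bool) :
    template_ok 1 T -> n \notin tlabels T ->
    flat_step (fillT (fun _ => [::]) T) (fillT (R1fill n b) T)
| step_R2 (T : template) (n m : nat) (b par : bool) :
    template_ok 2 T -> n \notin tlabels T -> m \notin tlabels T -> n != m ->
    flat_step (fillT (fun _ => [::]) T) (fillT (R2fill n m b par) T)
| step_R3 (T : template) (x y z : nat) (e fa fb fc : bool) :
    template_ok 3 T -> uniq [:: x; y; z] ->
    all (fun l => l \notin tlabels T) [:: x; y; z] ->
    flat_step (fillT (R3fill x y z e fa fb fc) T)
              (fillT (R3fill x y z e (~~ fa) (~~ fb) (~~ fc)) T).

(* flat virtual equivalence (virtual moves and planar isotopy act trivially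
   on Gauss diagrams) *)
Definition flat_equiv : gauss2 -> gauss2 -> Prop := clos_refl_sym_trans gauss2 flat_step.

Definition cross12 (L : gauss2) : seq nat :=
  undup [seq p.1 | p <- L.1 & p.1 \in labels L.2].
(* sgn x = +1 iff (tangent of comp. 1, tangent of comp. 2) is positive at x *)
Definition sgn12 (L : gauss2) (x : nat) : int :=
  if (x, true) \in L.1 then 1%R else (-1)%R.
Definition index12 (L : gauss2) : int := (\sum_(x <- cross12 L) sgn12 L x)%R.

From mathcomp Require Import all_boot all_algebra.
From Stdlib Require Import Relations.
Set Implicit Arguments. Unset Strict Implicit. Unset Printing Implicit Defensive.
Import GRing.Theory.
Local Open Scope ring_scope.

(* The index is a sum of local contributions, one per crossing label [x],
   and the contribution of [x] only depends on which of the passages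
   [(x, true)], [(x, false)] occur on which component.  Rotations and
   relabelings do not change these memberships, and a flat R3 move only
   reorders passages inside the three filled strands.  A flat R1 move adds
   a crossing of a strand with itself, which contributes nothing; a flat R2
   move adds two crossings of opposite signs whose contributions cancel. *)

Definition contrib_of (t1 f1 t2 f2 : bool) : int :=
  if (t1 || f1) && (t2 || f2) then (if t1 then 1 else -1) else 0.

Definition contrib (L : gauss2) (x : nat) : int :=
  contrib_of ((x, true) \in L.1) ((x, false) \in L.1)
             ((x, true) \in L.2) ((x, false) \in L.2).

Lemma mem_labels (w : word) x :
  (x \in labels w) = ((x, true) \in w) || ((x, false) \in w).
Proof.
apply/mapP/orP => [[[y []] yw /= ->]|[xw|xw]];
  by [left | right | exists (x, true) | exists (x, false)].
Qed.

Lemma mem_cross12 L x :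
  (x \in cross12 L) = (x \in labels L.1) && (x \in labels L.2).
Proof.
rewrite mem_undup; apply/mapP/andP => [[p]|[/mapP[p pL1 ->] xL2]].
  by rewrite mem_filter => /andP[pL2 pL1] ->; split=> //; apply: map_f.
by exists p; rewrite // mem_filter xL2.
Qed.

Lemma index12_big_contrib L (S : seq nat) :
  uniq S -> {subset labels L.1 <= S} -> index12 L = \sum_(x <- S) contrib L x.
Proof.
move=> uS sub.
have -> : \sum_(x <- S) contrib L x = \sum_(x <- S | x \in cross12 L) sgn12 L x.
  rewrite [RHS]big_mkcond; apply: eq_bigr => x _.
  by rewrite /contrib /contrib_of mem_cross12 !mem_labels /sgn12; case: ifP.
rewrite -big_filter; apply: perm_big; apply: uniq_perm.
- exact: undup_uniq.
- exact: filter_uniq.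
move=> x; rewrite mem_filter; case Cx: (x \in cross12 L) => //=.
by apply/esym/sub; move: Cx; rewrite mem_cross12 => /andP[].
Qed.

Lemma index12_big_contrib2 L L' :
  let S := undup (labels (L.1 ++ L'.1)) in
  index12 L = \sum_(x <- S) contrib L x /\ index12 L' = \sum_(x <- S) contrib L' x.
Proof.
have uS := undup_uniq (labels (L.1 ++ L'.1)).
by split; apply: index12_big_contrib => // x x1;
  rewrite mem_undup /labels map_cat mem_cat x1 ?orbT.
Qed.

Lemma eq_index12_contrib L L' : contrib L =1 contrib L' -> index12 L = index12 L'.
Proof.
have [-> ->] := index12_big_contrib2 L L'.
by move=> eqLL'; apply: eq_bigr => x _.
Qed.

Lemma eq_index12_contrib2 L L' n m : n != m ->
  (forall x, x != n -> x != m -> contrib L x = contrib L' x) ->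
  contrib L n + contrib L m = contrib L' n + contrib L' m ->
  index12 L = index12 L'.
Proof.
move=> nm eqLL' eqnm.
set r := [seq x <- undup (labels (L.1 ++ L'.1)) | (x != n) && (x != m)].
have uS : uniq (n :: m :: r).
  rewrite /= !inE !mem_filter !eqxx andbF /= orbF nm.
  exact: filter_uniq (undup_uniq _).
have sub x : x \in labels (L.1 ++ L'.1) -> x \in n :: m :: r.
  move=> x1; rewrite !inE mem_filter mem_undup x1 andbT.
  by case: (x == n); case: (x == m).
rewrite (@index12_big_contrib L _ uS); last first.
  by move=> x x1; apply: sub; rewrite /labels map_cat mem_cat x1.
rewrite (@index12_big_contrib L' _ uS); last first.
  by move=> x x1; apply: sub; rewrite /labels map_cat mem_cat x1 orbT.
rewrite !big_cons !addrA eqnm; congr (_ + _).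
by apply: eq_big_seq => x; rewrite mem_filter => /andP[/andP[xn xm] _]; apply: eqLL'.
Qed.

Lemma mem_relabel_word (f : nat -> nat) (w : word) x c : injective f ->
  ((f x, c) \in [seq (f p.1, p.2) | p : passage <- w]) = ((x, c) \in w).
Proof.
move=> inj_f.
have inj_g : injective (fun p : passage => (f p.1, p.2)).
  by move=> [a b] [a' b'] [/inj_f -> ->].
exact: (mem_map inj_g w (x, c)).
Qed.

Lemma index12_relabel (f : nat -> nat) L :
  injective f -> index12 (relabel f L) = index12 L.
Proof.
move=> inj_f; set S := undup (labels L.1).
have uS : uniq (map f S) by rewrite (map_inj_uniq inj_f) undup_uniq.
rewrite (@index12_big_contrib (relabel f L) _ uS); last first.
  by move=> _ /mapP[p /mapP[q qL1 ->] ->]; rewrite /= map_f // mem_undup map_f.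
rewrite (@index12_big_contrib L S) ?undup_uniq //; last by move=> x; rewrite mem_undup.
by rewrite big_map; apply: eq_bigr => x _; rewrite /contrib !mem_relabel_word.
Qed.

Lemma has_bounded (s : seq nat) k P : (forall j, j \in s -> (j < k)%N) ->
  has P s = has (fun j => (j \in s) && P j) (iota 0 k).
Proof.
move=> s_lt; apply/hasP/hasP => [[j js Pj]|[j _ /andP[]]]; last by exists j.
by exists j; rewrite ?js // mem_iota add0n s_lt.
Qed.

Definition holes (w : seq item) : seq nat :=
  pmap (fun it => if it is Hole j then Some j else None) w.

Definition nofill : nat -> word := fun _ => [::].

Lemma fill_word_cons f it w : fill_word f (it :: w) =
  (match it with Pass n b => [:: (n, b)] | Hole j => f j end)
  ++ fill_word f w.
Proof. by case: it. Qed.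

Lemma mem_fill f w p : (p \in fill_word f w) =
  (p \in fill_word nofill w) || has (fun j => p \in f j) (holes w).
Proof.
elim: w => [|[n c|j] w IH] //; rewrite !fill_word_cons !mem_cat IH /=.
  by rewrite orbA.
by rewrite orbCA.
Qed.

Lemma eq_mem_fill f g w : (forall j, f j =i g j) -> fill_word f w =i fill_word g w.
Proof.
move=> eqfg p; rewrite [LHS]mem_fill [RHS]mem_fill.
by congr orb; apply: eq_has => j; apply: eqfg.
Qed.

Lemma fresh_fill T n c : n \notin tlabels T ->
  ((n, c) \in fill_word nofill T.1) = false /\ ((n, c) \in fill_word nofill T.2) = false.
Proof.
have lab w : (n, c) \in fill_word nofill w ->
    n \in pmap (fun it => if it is Pass n _ then Some n else None) w.
  elim: w => [|[n' c'|j] w IH] //; rewrite fill_word_cons mem_cat //=.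
  by rewrite !inE => /orP[/eqP[-> _]|/IH ->]; rewrite ?eqxx ?orbT.
rewrite /tlabels pmap_cat mem_cat negb_or => /andP[n1 n2].
by split; apply/negP => /lab; apply/negP.
Qed.

Lemma mem_holes j w : (j \in holes w) = (0 < count (isHole j) w)%N.
Proof.
by elim: w => [|[n c|j'] w IH] //=; rewrite inE IH eq_sym; case: (j' == j).
Qed.

Section TemplateHoles.

Variables (k : nat) (T : template).
Hypothesis T_ok : template_ok k T.

Lemma template_hole_bound j : (j \in holes T.1) || (j \in holes T.2) -> (j < k)%N.
Proof.
case/andP: T_ok => bound _; move: bound; rewrite /holes -mem_cat -pmap_cat.
elim: (T.1 ++ T.2) => [|[n c|j'] w IH] //= /andP[jk /IH jw] //.
by case/predU1P=> [->|/jw].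
Qed.

Lemma template_hole_side j : (j < k)%N -> (j \in holes T.2) = ~~ (j \in holes T.1).
Proof.
move=> jk; case/andP: T_ok => _ /allP /(_ j); rewrite mem_iota add0n jk => /(_ isT).
rewrite count_cat !mem_holes.
by case: (count _ T.1) => [|[|a]]; case: (count _ T.2) => [|[|b]]; rewrite ?addnS.
Qed.

Lemma has_holes1 P :
  has P (holes T.1) = has (fun j => (j \in holes T.1) && P j) (iota 0 k).
Proof. by apply: has_bounded => j j1; rewrite template_hole_bound ?j1. Qed.

Lemma has_holes2 P :
  has P (holes T.2) = has (fun j => (j \in holes T.2) && P j) (iota 0 k).
Proof. by apply: has_bounded => j j2; rewrite template_hole_bound ?j2 ?orbT. Qed.

End TemplateHoles.

Lemma index12_R1 T n b : template_ok 1 T -> n \notin tlabels T ->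
  index12 (fillT nofill T) = index12 (fillT (R1fill n b) T).
Proof.
move=> T_ok fresh_n; apply: eq_index12_contrib => x.
rewrite /contrib /= !(mem_fill (R1fill n b)) !(has_holes1 T_ok) !(has_holes2 T_ok) /=.
rewrite (template_hole_side T_ok) // /R1fill !inE !xpair_eqE.
have [->|xn] := eqVneq x n; last by rewrite !andFb !orbF !andbF !orbF.
have [t1 t2] := fresh_fill true fresh_n; have [f1 f2] := fresh_fill false fresh_n.
by rewrite t1 t2 f1 f2; case: (0 \in holes T.1); case: b.
Qed.

Lemma index12_R2 T n m b par : template_ok 2 T ->
  n \notin tlabels T -> m \notin tlabels T -> n != m ->
  index12 (fillT nofill T) = index12 (fillT (R2fill n m b par) T).
Proof.
move=> T_ok fresh_n fresh_m nm; apply: (eq_index12_contrib2 nm) => [x xn xm|];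
  rewrite /contrib /= !(mem_fill (R2fill n m b par)) !(has_holes1 T_ok)
          !(has_holes2 T_ok) /= !(template_hole_side T_ok) // /R2fill.
  by case: par; rewrite !inE !xpair_eqE (negbTE xn) (negbTE xm)
    !andFb !orbF !andbF !orbF.
have [t1 t2] := fresh_fill true fresh_n; have [f1 f2] := fresh_fill false fresh_n.
have [t1' t2'] := fresh_fill true fresh_m; have [f1' f2'] := fresh_fill false fresh_m.
have mn : m != n by rewrite eq_sym.
rewrite t1 t2 f1 f2 t1' t2' f1' f2'.
case: par; rewrite !inE !xpair_eqE !eqxx (negbTE nm) (negbTE mn) ?andTb ?andFb;
  by case: (0 \in holes T.1); case: (1 \in holes T.1); case: b.
Qed.

Lemma R3fill_flip_mem x y z e fa fb fc j :
  R3fill x y z e fa fb fc j =i R3fill x y z e (~~ fa) (~~ fb) (~~ fc) j.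
Proof.
move=> p; case: j => [|[|j]]; case: fa; case: fb; case: fc;
  by rewrite /R3fill /= !inE orbC.
Qed.

Lemma index12_step L L' : flat_step L L' -> index12 L = index12 L'.
Proof.
case=> {L L'} [k L|k L|f L inj_f|T n b|T n m b par|T x y z e fa fb fc _ _ _].
- by apply: eq_index12_contrib => x; rewrite /contrib /= !mem_rot.
- by apply: eq_index12_contrib => x; rewrite /contrib /= !mem_rot.
- by rewrite index12_relabel.
- exact: index12_R1.
- exact: index12_R2.
apply: eq_index12_contrib => p.
by rewrite /contrib /= !(eq_mem_fill _ (@R3fill_flip_mem x y z e fa fb fc)).
Qed.

Theorem mainTheorem1 (L L' : gauss2) :
  wf_gauss2 L -> flat_equiv L L' -> index12 L = index12 L'.
Proof.
move=> _; elim=> {L L'} [L L' /index12_step //|//|L L' _ -> //|L L' L'' _ -> _ -> //].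
Qed.
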